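(* Let $Y,\widetilde Y\in\mathbb{R}^{m\times N}$ with nonzero columns $\widetilde Y_t$, $w\in\mathbb{R}^N$, $r\in\mathbb Z^+$. Run the $r$-th order data alignment: $\hat u_0=0$; for $t=1,\dots,N$, $\widetilde w_t=\langle\widetilde Y_t,\hat u_{t-1}+w_tY_t\rangle/\|\widetilde Y_t\|_2^2$ and $\hat u_t=\hat u_{t-1}+w_tY_t-\widetilde w_t\widetilde Y_t$; for $t=N+1,\dots,rN$ (with subscripts of $w,\widetilde w,Y,\widetilde Y$ taken modulo $N$, in $\{1,\dots,N\}$, and $\widetilde w_t$ on the right of the first line being its current value), $\hat v_{t-1}=\hat u_{t-1}-w_tY_t+\widetilde w_t\widetilde Y_t$, then $\widetilde w_t\leftarrow\langle\widetilde Y_t,\hat v_{t-1}+w_tY_t\rangle/\|\widetilde Y_t\|_2^2$, and $\hat u_t=\hat v_{t-1}+w_tY_t-\widetilde w_t\widetilde Y_t$. Then $$\hat u_N=\sum_{j=1}^N w_j\,P_{\widetilde Y_N^\perp}\cdots P_{\widetilde Y_{j+1}^\perp}P_{\widetilde Y_j^\perp}(Y_j)\quad\text{and}\quad \hat u_{rN}=P^{r-1}\hat u_N,$$ where $P:=P_{\widetilde Y_N^\perp}\cdots P_{\widetilde Y_2^\perp}P_{\widetilde Y_1^\perp}$. Moreover $\hat u_{rN}=Yw-\widetilde Y\widetilde w$ for the final vector $\widetilde w$.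
   Context: For nonzero $z\in\mathbb R^m$, $P_{z^\perp}=I-zz^\top/\|z\|_2^2$ is the orthogonal projection onto $\mathrm{span}(z)^\perp$. Columns of a matrix $A$ are denoted $A_j$. *)

From HB Require Import structures.
From mathcomp Require Import all_boot all_order all_algebra.
Set Implicit Arguments. Unset Strict Implicit. Unset Printing Implicit Defensive.
Import Order.TTheory GRing.Theory Num.Theory.
Local Open Scope ring_scope.

Section DataAlignment.
Variable R : realFieldType.

Definition dotv (m : nat) (a b : 'cV[R]_m) : R := (a^T *m b) 0 0.

Definition proj_perp (m : nat) (z : 'cV[R]_m) : 'M[R]_m :=
  1%:M - (dotv z z)^-1 *: (z *m z^T).

Definition set_entry (N : nat) (v : 'cV[R]_N) (j : 'I_N) (c : R) : 'cV[R]_N :=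
  \col_i (if i == j then c else v i 0).

Variables (m N : nat) (Y Yt : 'M[R]_(m, N)) (w : 'cV[R]_N).

(* The state is (u_hat, w_tilde).  Column j (0-based) is column j+1 of the paper. *)

Definition align_step1 (s : 'cV[R]_m * 'cV[R]_N) (j : 'I_N) :=
  let: (u, wt) := s in
  let a := u + w j 0 *: col j Y in
  let c := dotv (col j Yt) a / dotv (col j Yt) (col j Yt) in
  (a - c *: col j Yt, set_entry wt j c).

(* step t > N of the alignment (later passes), j = t mod N *)
Definition align_step2 (s : 'cV[R]_m * 'cV[R]_N) (j : 'I_N) :=
  let: (u, wt) := s in
  let v := u - w j 0 *: col j Y + wt j 0 *: col j Yt in
  let a := v + w j 0 *: col j Y in
  let c := dotv (col j Yt) a / dotv (col j Yt) (col j Yt) in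
  (a - c *: col j Yt, set_entry wt j c).

Definition align_pass1 s := foldl align_step1 s (enum 'I_N).
Definition align_pass2 s := foldl align_step2 s (enum 'I_N).

Definition align_N : 'cV[R]_m * 'cV[R]_N := align_pass1 (0, 0).

(* state (u_hat_{rN}, w_tilde) after t = 1..rN (r >= 1) *)
Definition align_rN (r : nat) : 'cV[R]_m * 'cV[R]_N :=
  iter r.-1 align_pass2 align_N.

(* P_{Yt_N^perp} ... P_{Yt_{j+1}^perp} P_{Yt_j^perp} (1-based j), i.e. the
   product over the 0-based indices i >= j, later indices on the left. *)
Definition proj_chain (j : 'I_N) : 'M[R]_m :=
  foldl (fun M i => proj_perp (col i Yt) *m M) 1%:M
        [seq i <- enum 'I_N | (j <= nat_of_ord i)%N].

Definition proj_full : 'M[R]_m :=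
  foldl (fun M i => proj_perp (col i Yt) *m M) 1%:M (enum 'I_N).

End DataAlignment.

From HB Require Import structures.
From mathcomp Require Import all_boot all_order all_algebra.
Import Order.TTheory GRing.Theory Num.Theory.
Set Implicit Arguments. Unset Strict Implicit. Unset Printing Implicit Defensive.
Local Open Scope ring_scope.

(* The key observation is that one alignment step is a projection: the
   new residual is a - <z,a>/<z,z> z = P_{z^perp} a, with z = Yt_j and
   a = u + w_j Y_j.  In the later passes the step first removes the
   contribution w_j Y_j - wt_j Yt_j of column j and then adds w_j Y_j
   back, so a = u + wt_j Yt_j, and P_{z^perp} kills the Yt_j term: the
   step is just u |-> P_{Yt_j^perp} u.  Hence a later pass multiplies the
   residual by P = P_{Yt_N^perp} ... P_{Yt_1^perp}, while the first pass
   unrolls to the sum over j of w_j P_{Yt_N^perp} ... P_{Yt_j^perp} Y_j.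

   Independently, every step preserves the bookkeeping invariant
   u = Y w - Yt wt (in the first pass with w restricted to the columns
   processed so far), because the step changes u and wt by opposite
   multiples of the column Yt_j. *)

Section Projections.
Variable R : realFieldType.

Lemma proj_perpE (m : nat) (z a : 'cV[R]_m) :
  proj_perp z *m a = a - (dotv z a / dotv z z) *: z.
Proof.
rewrite /proj_perp mulmxBl mul1mx -scalemxAl -mulmxA.
by rewrite [z^T *m a]mx11_scalar mul_mx_scalar scalerA mulrC.
Qed.

Lemma dotv_self (m : nat) (z : 'cV[R]_m) :
  dotv z z = \sum_(i < m) z i 0 ^+ 2.
Proof. by rewrite /dotv mxE; apply: eq_bigr => i _; rewrite mxE expr2. Qed.

Lemma dotv_self_neq0 (m : nat) (z : 'cV[R]_m) : z != 0 -> dotv z z != 0.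
Proof.
apply: contraNneq; rewrite dotv_self => /psumr_eq0P zz0.
apply/eqP/matrixP => i j; rewrite ord1 mxE.
by apply/eqP; rewrite -sqrf_eq0 zz0 // => k _; apply: sqr_ge0.
Qed.

Lemma proj_perp_self (m : nat) (z : 'cV[R]_m) :
  z != 0 -> proj_perp z *m z = 0.
Proof. by move=> nz_z; rewrite proj_perpE divff ?dotv_self_neq0 // scale1r subrr. Qed.

Lemma set_entryE (N : nat) (v : 'cV[R]_N) (j : 'I_N) (c : R) :
  set_entry v j c = v + (c - v j 0) *: delta_mx j 0.
Proof.
apply/matrixP => i k; rewrite !mxE ord1 eqxx andbT.
by case: eqP => [->|_]; rewrite ?mulr1 ?mulr0 ?addr0 // addrC subrK.
Qed.

End Projections.

Section Alignment.
Variables (R : realFieldType) (m N : nat).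
Variables (Y Yt : 'M[R]_(m, N)) (w : 'cV[R]_N).

(* The ordered product P_{Yt_{s_k}^perp} ... P_{Yt_{s_1}^perp} along s;
   proj_full and proj_chain are instances of it. *)
Definition proj_prod (s : seq 'I_N) : 'M[R]_m :=
  foldl (fun M i => proj_perp (col i Yt) *m M) 1%:M s.

Lemma proj_prod_rcons (s : seq 'I_N) (j : 'I_N) :
  proj_prod (rcons s j) = proj_perp (col j Yt) *m proj_prod s.
Proof. by rewrite /proj_prod foldl_rcons. Qed.

Definition consistent (st : 'cV[R]_m * 'cV[R]_N) : Prop :=
  st.1 = Y *m w - Yt *m st.2.

Lemma align_step1_fst (u : 'cV[R]_m) (wt : 'cV[R]_N) (j : 'I_N) :
  (align_step1 Y Yt w (u, wt) j).1
    = proj_perp (col j Yt) *m (u + w j 0 *: col j Y).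
Proof. by rewrite /= proj_perpE. Qed.

Hypothesis nz_Yt : forall j : 'I_N, col j Yt != 0.

Lemma align_step2_fst (u : 'cV[R]_m) (wt : 'cV[R]_N) (j : 'I_N) :
  (align_step2 Y Yt w (u, wt) j).1 = proj_perp (col j Yt) *m u.
Proof.
rewrite /= (addrAC (u - _)) subrK -proj_perpE.
by rewrite mulmxDr -scalemxAr proj_perp_self // scaler0 addr0.
Qed.

Lemma fold_step2_fst (s : seq 'I_N) (st : 'cV[R]_m * 'cV[R]_N) :
  (foldl (align_step2 Y Yt w) st s).1 = proj_prod s *m st.1.
Proof.
elim/last_ind: s => [|s j IH]; first by rewrite mul1mx.
rewrite foldl_rcons proj_prod_rcons -mulmxA -IH.
by case: (foldl _ _ s) => u wt; rewrite align_step2_fst.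
Qed.

(* A later-pass step preserves consistency: it moves u by -c' Yt_j and
   wt by +c' e_j, for c' the change of the weight wt_j. *)
Lemma align_step2_consistent (st : 'cV[R]_m * 'cV[R]_N) (j : 'I_N) :
  consistent st -> consistent (align_step2 Y Yt w st j).
Proof.
case: st => u wt; rewrite /consistent /= => ->.
rewrite set_entryE mulmxDr -scalemxAr -colE scalerBl.
by rewrite (addrAC (_ - w j 0 *: _)) subrK opprD opprB !addrA.
Qed.

Lemma fold_step2_consistent (s : seq 'I_N) (st : 'cV[R]_m * 'cV[R]_N) :
  consistent st -> consistent (foldl (align_step2 Y Yt w) st s).
Proof.
by elim: s st => [|j s IH] st //= st_consistent; apply/IH/align_step2_consistent.
Qed.

Definition partial_weights (s : seq 'I_N) : 'cV[R]_N :=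
  \col_i (if i \in s then w i 0 else 0).

Lemma partial_weights_enum : partial_weights (enum 'I_N) = w.
Proof. by apply/matrixP => i k; rewrite !mxE mem_enum ord1. Qed.

Lemma fold_step1_consistent (s : seq 'I_N) : uniq s ->
  let st := foldl (align_step1 Y Yt w) (0, 0) s in
  st.1 = Y *m partial_weights s - Yt *m st.2
  /\ forall i, i \notin s -> st.2 i 0 = 0.
Proof.
elim/last_ind: s => [|s j IH].
  move=> _ /=; split; last by move=> i _; rewrite mxE.
  have -> : partial_weights [::] = 0 by apply/matrixP => i k; rewrite !mxE.
  by rewrite !mulmx0 subrr.
rewrite rcons_uniq => /andP [j_notin_s uniq_s].
rewrite !foldl_rcons; move: (IH uniq_s).
case: (foldl _ _ s) => u wt /= [-> wt_off_s].
have weights_rcons : partial_weights (rcons s j)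
    = partial_weights s + w j 0 *: delta_mx j 0.
  apply/matrixP => i k; rewrite !mxE ord1 eqxx andbT mem_rcons in_cons.
  case: eqP => [->|_]; rewrite ?mulr1 ?mulr0 ?addr0 //=.
  by rewrite (negbTE j_notin_s) add0r.
split.
  rewrite set_entryE wt_off_s // subr0 weights_rcons !mulmxDr -!scalemxAr -!colE.
  by rewrite opprD !addrA (addrAC (_ *m partial_weights s)).
move=> i; rewrite mem_rcons in_cons negb_or => /andP [i_neq_j i_notin_s].
by rewrite mxE (negbTE i_neq_j) wt_off_s.
Qed.

(* The projections applied to Y_j during a pass along s: those of the
   columns of s from j onwards. *)
Definition proj_tail (s : seq 'I_N) (j : 'I_N) : 'M[R]_m :=
  proj_prod [seq i <- s | (j <= nat_of_ord i)%N].

Lemma fold_step1_fst (s : seq 'I_N) :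
  pairwise (fun a b : 'I_N => (a < b)%N) s ->
  (foldl (align_step1 Y Yt w) (0, 0) s).1
    = \sum_(j <- s) w j 0 *: (proj_tail s j *m col j Y).
Proof.
elim/last_ind: s => [|s k IH]; first by rewrite big_nil.
rewrite pairwise_rcons => /andP [/allP s_lt_k incr_s].
rewrite foldl_rcons; move: (IH incr_s); case: (foldl _ _ s) => u wt /= IHu.
rewrite -proj_perpE IHu big_rcons /= mulmxDr -scalemxAr.
congr (_ + _).
  rewrite mulmx_sumr; apply: eq_big_seq => j j_in_s.
  rewrite /proj_tail filter_rcons ltnW ?s_lt_k // proj_prod_rcons.
  by rewrite -scalemxAr mulmxA.
rewrite /proj_tail filter_rcons leqnn (@eq_in_filter _ _ pred0) ?filter_pred0.
  by rewrite proj_prod_rcons mulmx1.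
by move=> i /s_lt_k i_lt_k /=; rewrite leqNgt i_lt_k.
Qed.

Lemma pairwise_enum_ord : pairwise (fun a b : 'I_N => (a < b)%N) (enum 'I_N).
Proof.
rewrite -(pairwise_map val (fun a b => (a < b)%N)) val_enum_ord.
by rewrite -sorted_pairwise ?iota_ltn_sorted //; apply: ltn_trans.
Qed.

End Alignment.

Theorem mainTheorem3 (R : realFieldType) (m N : nat)
  (Y Yt : 'M[R]_(m, N)) (w : 'cV[R]_N) (r : nat)
  (hr : (0 < r)%N) (hYt : forall j : 'I_N, col j Yt != 0) :
  (align_N Y Yt w).1
    = \sum_(j < N) w j 0 *: (proj_chain Yt j *m col j Y)
  /\ (align_rN Y Yt w r).1
    = iter r.-1 (mulmx (proj_full Yt)) (align_N Y Yt w).1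
  /\ (align_rN Y Yt w r).1 = Y *m w - Yt *m (align_rN Y Yt w r).2.
Proof.
have first_pass_consistent : consistent Y Yt w (align_N Y Yt w).
  have [first_u _] := fold_step1_consistent Y Yt w (enum_uniq 'I_N).
  by rewrite /consistent /align_N /align_pass1 first_u partial_weights_enum.
split; last split.
- by rewrite /align_N /align_pass1 fold_step1_fst ?pairwise_enum_ord // big_enum.
- rewrite /align_rN; elim: r.-1 => [|n IH] //=.
  by rewrite /align_pass2 fold_step2_fst // IH.
- suff : consistent Y Yt w (align_rN Y Yt w r) by [].
  rewrite /align_rN; elim: r.-1 => [|n IH] //=.
  exact: fold_step2_consistent.
Qed.
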